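(* Let $p\in(0,1)$ and let $f\colon(\{0,1\}^n,\mu_p)\to\{0,1\}$ with $\mu_p(f)>0$ and $m=m(f)>1/p^2$. If for some $S\subseteq[n]$ with $|S|\le\frac{1}{4p}$ we have $\frac{\mu_p(f_{S\to0})}{\mu_p(f)}<\frac14$, then $\mu_p(f)<\exp(-0.001\sqrt m)$.
   Context: $\mu_p$ is the $p$-biased product measure on $\{0,1\}^n$, $\mu_p(f)=\mathbb{E}_{\mu_p}f$, and $f_{S\to0}$ is the restriction fixing all coordinates in $S$ to $0$ (its measure is the $\mu_p$-expectation over the remaining coordinates). With $\chi_i(x)=\frac{x_i-p}{\sqrt{p(1-p)}}$, $\hat f(\{i\})=\mathbb{E}_{\mu_p}[f\chi_i]$; $\delta=\max_i|\hat f(\{i\})|$ and $m(f)=|\{i:\hat f(\{i\})^2\ge\delta^2/2\}|$. *)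

From HB Require Import structures.
From mathcomp Require Import all_boot all_order all_algebra.
From mathcomp Require Import reals sequences.
Set Implicit Arguments. Unset Strict Implicit. Unset Printing Implicit Defensive.
Import Order.TTheory GRing.Theory Num.Theory.
Local Open Scope ring_scope.

(* the discrete cube {0,1}^n ; true = 1, false = 0 *)
Definition cube (n : nat) := {ffun 'I_n -> bool}.

Section Biased.
Variable (R : realType) (p : R) (n : nat).

Definition mu_pt (x : cube n) : R :=
  \prod_(i < n) (if x i then p else 1 - p).

Definition Ep (g : cube n -> R) : R := \sum_(x : cube n) mu_pt x * g x.

Definition mu_p (f : cube n -> bool) : R := Ep (fun x => (f x)%:R).

(* f_{S->0}: coordinates in S fixed to 0; viewed as a function on the whole
   cube that ignores coordinates in S, so its mu_p-measure equals the
   expectation over the remaining coordinates. *)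
Definition restr0 (S : {set 'I_n}) (f : cube n -> bool) : cube n -> bool :=
  fun x => f [ffun i => if i \in S then false else x i].

Definition chi (i : 'I_n) (x : cube n) : R :=
  ((x i)%:R - p) / Num.sqrt (p * (1 - p)).

Definition fhat1 (f : cube n -> bool) (i : 'I_n) : R :=
  Ep (fun x => (f x)%:R * chi i x).

Definition delta (f : cube n -> bool) : R :=
  \big[Num.max/0]_(i < n) `|fhat1 f i|.

Definition mf (f : cube n -> bool) : nat :=
  #|[set i : 'I_n | delta f ^+ 2 / 2 <= fhat1 f i ^+ 2]|.

End Biased.

From HB Require Import structures.
From mathcomp Require Import all_boot all_order all_algebra.
From mathcomp Require Import reals sequences exp.
From mathcomp Require Import ring lra.
Set Implicit Arguments. Unset Strict Implicit. Unset Printing Implicit Defensive.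
Import Order.TTheory GRing.Theory Num.Theory.
Local Open Scope ring_scope.

(* Let T be the set of heavy coordinates (the m(f) coordinates i with
   fhat({i})^2 >= delta^2/2) and L = sum_(j in T) sign(fhat({j})) (x_j - p).
   By independence of the coordinates, E[exp(L/2)] <= exp(p|T|/2).
   Zeroing the coordinates of S removes at most sum_(i in S) E[f x_i] of the
   mass of f, so the hypothesis on S forces delta * sigma > 2 p mu_p(f); hence
   the mean of L under f exceeds 1.4 p |T|.  Jensen's inequality for the
   measure f mu_p then gives mu_p(f) exp(0.7 p |T|) <= E[f exp(L/2)]
   <= exp(p|T|/2), i.e. mu_p(f) < exp(-0.2 p m), and p m >= sqrt m since
   m > 1/p^2. *)

Lemma expR_half_le2 (R : realType) : expR (1 / 2 : R) <= 2.
Proof.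
have hinv : expR (1 / 2 : R) * expR (- (1 / 2)) = 1.
  by rewrite -expRD subrr expR0.
have := expR_ge1Dx (- (1 / 2) : R); have := expR_gt0 (1 / 2 : R).
move: hinv; set a := expR _; set b := expR _ => hinv ha hb.
have : 0 <= a * (b - 1 / 2) by apply: mulr_ge0; lra.
nra.
Qed.

Lemma expR_mean_le (R : realType) (I : finType) (w L : I -> R) :
  (forall i, 0 <= w i) -> 0 < \sum_i w i ->
  (\sum_i w i) * expR ((\sum_i w i * L i) / \sum_i w i)
    <= \sum_i w i * expR (L i).
Proof.
move=> w_ge0 W_gt0; set W := \sum_i w i; set c := (\sum_i w i * L i) / W.
have tangent i : expR c * (w i + w i * L i - c * w i) <= w i * expR (L i).
  have ec : expR (L i) = expR c * expR (L i - c) by rewrite -expRD; congr expR; ring.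
  have := expR_ge1Dx (L i - c).
  have : 0 <= expR c * w i by apply: mulr_ge0; [exact: ltW (expR_gt0 _)|].
  rewrite ec; nra.
apply: le_trans (ler_sum _ (fun i _ => tangent i)); rewrite -mulr_sumr mulrC.
rewrite sumrB big_split /= -mulr_sumr -/W /c mulfVK ?addrK //.
exact: lt0r_neq0 W_gt0.
Qed.

Lemma sqrt_le_mul (R : rcfType) (p m : R) :
  0 < p -> 1 / p ^+ 2 < m -> Num.sqrt m <= p * m.
Proof.
move=> p_gt0 hm; have p2_gt0 : 0 < p ^+ 2 by rewrite exprn_gt0.
have m_gt0 : 0 < m by apply: lt_trans hm; rewrite divr_gt0.
have m_le : m <= (p * m) ^+ 2.
  by rewrite ltr_pdivrMr // in hm; rewrite exprMn; nra.
apply: le_trans (ler_wsqrtr m_le) _.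
by rewrite sqrtr_sqr ger0_norm // mulr_ge0 ?ltW.
Qed.

Section Biased.
Variables (R : realType) (p : R) (n : nat).
Hypotheses (p_gt0 : 0 < p) (p_lt1 : p < 1).
(* lra and nra ignore section hypotheses: proofs that need them put them in
   the context first. *)

Local Notation sigma := (Num.sqrt (p * (1 - p))).

Lemma sigma_gt0 : 0 < sigma.
Proof. by rewrite sqrtr_gt0 mulr_gt0 // subr_gt0. Qed.

Lemma mu_pt_ge0 (x : cube n) : 0 <= mu_pt p x.
Proof. by apply: prodr_ge0 => i _; case: (x i); rewrite ?subr_ge0 ltW. Qed.

Lemma Ep_bool_mul_le (f : cube n -> bool) (g : cube n -> R) :
  (forall x, 0 <= g x) -> Ep p (fun x => (f x)%:R * g x) <= Ep p g.
Proof.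
move=> g_ge0; apply: ler_sum => x _; apply: ler_wpM2l; first exact: mu_pt_ge0.
by case: (f x); rewrite ?mul1r ?mul0r.
Qed.

Lemma fhat1E (f : cube n -> bool) (i : 'I_n) :
  fhat1 p f i * sigma = Ep p (fun x => (f x)%:R * ((x i)%:R - p)).
Proof.
rewrite /fhat1 /Ep mulr_suml; apply: eq_bigr => x _.
by rewrite /chi !mulrA divfK ?lt0r_neq0 ?sigma_gt0.
Qed.

Lemma Ep_mul_coordE (f : cube n -> bool) (i : 'I_n) :
  Ep p (fun x => (f x)%:R * (x i)%:R) = fhat1 p f i * sigma + p * mu_p p f.
Proof.
rewrite fhat1E /mu_p /Ep mulr_sumr -big_split /=; apply: eq_bigr => x _; ring.
Qed.

Lemma norm_fhat1_le_delta (f : cube n -> bool) (i : 'I_n) :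
  `|fhat1 p f i| <= delta p f.
Proof. exact: le_bigmax. Qed.

Definition heavy (f : cube n -> bool) :=
  [set i : 'I_n | delta p f ^+ 2 / 2 <= fhat1 p f i ^+ 2].

Lemma mfE (f : cube n -> bool) : mf p f = #|heavy f|.
Proof. by []. Qed.

Lemma heavy_norm_fhat1_ge (f : cube n -> bool) (i : 'I_n) :
  i \in heavy f -> 7 / 10 * delta p f <= `|fhat1 p f i|.
Proof.
rewrite inE -(real_normK (num_real (fhat1 p f i))) => hi.
have := normr_ge0 (fhat1 p f i); nra.
Qed.

Lemma restr0_id (S : {set 'I_n}) (f : cube n -> bool) (x : cube n) :
  [forall i in S, ~~ x i] -> restr0 S f x = f x.
Proof.
move=> /forallP x0; congr f; apply/ffunP => i; rewrite ffunE.
by case: ifP => // iS; have := x0 i; rewrite iS; case: (x i).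
Qed.

Lemma sum_coord_ge1 (S : {set 'I_n}) (x : cube n) :
  ~~ [forall i in S, ~~ x i] -> 1 <= \sum_(i in S) ((x i)%:R : R).
Proof.
move=> /forallPn[i]; rewrite negb_imply negbK => /andP[iS xi].
by rewrite (bigD1 i) //= xi lerDl sumr_ge0 // => j _; case: (x j).
Qed.

Lemma mu_p_restr0_ge (S : {set 'I_n}) (f : cube n -> bool) :
  mu_p p f - \sum_(i in S) Ep p (fun x => (f x)%:R * (x i)%:R)
    <= mu_p p (restr0 S f).
Proof.
pose P (x : cube n) := [forall i in S, ~~ x i].
pose w x := mu_pt p x * (f x)%:R.
have w_ge0 x : 0 <= w x by rewrite mulr_ge0 ?mu_pt_ge0.
have in_P : \sum_(x | P x) w x <= mu_p p (restr0 S f).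
  rewrite /mu_p /Ep [X in _ <= X](bigID P) /=.
  rewrite [X in _ <= X + _](eq_bigr w) => [|x Px]; last by rewrite restr0_id.
  by rewrite lerDl sumr_ge0 // => x _; rewrite mulr_ge0 ?mu_pt_ge0.
have out_P : \sum_(x | ~~ P x) w x
    <= \sum_(i in S) Ep p (fun x => (f x)%:R * (x i)%:R).
  apply: (@le_trans _ _ (\sum_(x | ~~ P x) w x * \sum_(i in S) ((x i)%:R : R))).
    by apply: ler_sum => x nPx; rewrite ler_peMr ?sum_coord_ge1.
  rewrite /Ep exchange_big /=.
  under [X in _ <= X]eq_bigr => x _ do under eq_bigr => i _ do rewrite mulrA.
  under [X in _ <= X]eq_bigr => x _ do rewrite -mulr_sumr.
  rewrite [X in _ <= X](bigID P) /= lerDr; apply: sumr_ge0 => x _.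
  by apply: mulr_ge0; [exact: w_ge0 | apply: sumr_ge0 => i _; case: (x i)].
have -> : mu_p p f = \sum_x w x by [].
by rewrite lerBlDr (bigID P) /=; apply: lerD.
Qed.

Lemma delta_sigma_gt (S : {set 'I_n}) (f : cube n -> bool) :
  0 < mu_p p f -> #|S|%:R <= 1 / (4 * p) ->
  mu_p p (restr0 S f) / mu_p p f < 1 / 4 ->
  2 * p * mu_p p f < delta p f * sigma.
Proof.
set M := mu_p p f; set D := delta p f * sigma => M_gt0.
have p4_gt0 : 0 < 4 * p by rewrite mulr_gt0.
rewrite ler_pdivlMr // ltr_pdivrMr // => hS hr.
have sum_fhat : \sum_(i in S) Ep p (fun x => (f x)%:R * (x i)%:R)
    <= #|S|%:R * D + #|S|%:R * (p * M).
  have coef_le i : Ep p (fun x => (f x)%:R * (x i)%:R) <= D + p * M.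
    rewrite Ep_mul_coordE lerD2r.
    apply: ler_wpM2r; first exact: ltW sigma_gt0.
    exact: le_trans (ler_norm _) (norm_fhat1_le_delta f i).
  apply: le_trans (ler_sum _ (fun i _ => coef_le i)) _.
  by rewrite sumr_const mulrnDl !mulr_natl.
have := mu_p_restr0_ge S f; rewrite -/M => restr_ge.
have SpM : #|S|%:R * (p * M) <= M / 4.
  have : #|S|%:R * (4 * p) * M <= 1 * M by apply: ler_wpM2r; [exact: ltW|].
  lra.
have half_lt : M / 2 < #|S|%:R * D by move: M_gt0 hr; lra.
have D_gt0 : 0 < D.
  rewrite ltNge; apply/negP => D_le0.
  have : #|S|%:R * D <= 0 by rewrite mulr_ge0_le0.
  by move: M_gt0; lra.
have : 4 * p * (M / 2) < 4 * p * (#|S|%:R * D) by rewrite ltr_pM2l.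
have : 0 <= (1 - #|S|%:R * (4 * p)) * D.
  by apply: mulr_ge0; [rewrite subr_ge0 | exact: ltW].
lra.
Qed.

Lemma bernoulli_mgf_half_le (s : R) : s = 1 \/ s = -1 ->
  p * expR (s * (1 - p) / 2) + (1 - p) * expR (s * (0 - p) / 2) <= expR (p / 2).
Proof.
have := p_gt0; have := p_lt1; move=> hp1 hp0 [->|->].
- have e1 : expR (1 * (1 - p) / 2) = expR (1 / 2) * expR (- (p / 2)).
    by rewrite -expRD; congr expR; ring.
  have e2 : expR (1 * (0 - p) / 2) = expR (- (p / 2)) by congr expR; ring.
  have e3 : expR (p / 2) = expR (- (p / 2)) * expR p.
    by rewrite -expRD; congr expR; lra.
  rewrite e1 e2 e3.
  have := expR_half_le2 R; have := expR_ge1Dx p; have := expR_gt0 (- (p / 2)).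
  move=> h0 h1 h2.
  have : 0 <= (2 - expR (1 / 2)) * (p * expR (- (p / 2))).
    by apply: mulr_ge0; [lra | apply: mulr_ge0; lra].
  have : 0 <= expR (- (p / 2)) * (expR p - 1 - p) by apply: mulr_ge0; lra.
  nra.
- have e1 : expR (-1 * (1 - p) / 2) = expR (- (1 / 2)) * expR (p / 2).
    by rewrite -expRD; congr expR; ring.
  have e2 : expR (-1 * (0 - p) / 2) = expR (p / 2) by congr expR; ring.
  rewrite e1 e2.
  have : expR (- (1 / 2) : R) <= 1 by rewrite -[X in _ <= X]expR0 ler_expR; lra.
  have := expR_gt0 (p / 2); move=> h0 h1.
  have : 0 <= (1 - expR (- (1 / 2))) * (p * expR (p / 2)).
    by apply: mulr_ge0; [lra | apply: mulr_ge0; lra].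
  nra.
Qed.

Definition signed_sum (T : {set 'I_n}) (s : 'I_n -> R) (x : cube n) : R :=
  \sum_(j in T) s j * ((x j)%:R - p).

Lemma Ep_expR_signed_sum_le (T : {set 'I_n}) (s : 'I_n -> R) :
  (forall i, s i = 1 \/ s i = -1) ->
  Ep p (fun x => expR (signed_sum T s x / 2)) <= expR (#|T|%:R * (p / 2)).
Proof.
move=> s_pm1.
pose H (i : 'I_n) (b : bool) := (if b then p else 1 - p) *
  (if i \in T then expR (s i * ((b : nat)%:R - p) / 2) else 1).
have prodE (x : cube n) :
    mu_pt p x * expR (signed_sum T s x / 2) = \prod_i H i (x i).
  rewrite /signed_sum mulr_suml expR_sum big_mkcond /mu_pt -big_split /=.
  by apply: eq_bigr => i _; rewrite /H.
rewrite /Ep (eq_bigr _ (fun x _ => prodE x)) -bigA_distr_bigA /=.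
rewrite expRM_natl -prodr_const (big_mkcond (fun i => i \in T)) /=.
have := p_gt0; have := p_lt1; move=> hp1 hp0.
apply: ler_prod => i _; rewrite big_bool /H /=; case: ifP => iT.
- apply/andP; split; last exact: bernoulli_mgf_half_le.
  have := expR_gt0 (s i * (1 - p) / 2); have := expR_gt0 (s i * (0 - p) / 2).
  nra.
- by rewrite !mulr1; apply/andP; split; lra.
Qed.

Lemma Ep_mul_signed_sum (f : cube n -> bool) (T : {set 'I_n}) (s : 'I_n -> R) :
  Ep p (fun x => (f x)%:R * signed_sum T s x)
    = sigma * \sum_(j in T) s j * fhat1 p f j.
Proof.
rewrite /Ep /signed_sum mulr_sumr.
under eq_bigr => x _ do rewrite !mulr_sumr.
rewrite exchange_big /=; apply: eq_bigr => j _.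
rewrite [RHS]mulrCA [X in _ = _ * X]mulrC fhat1E /Ep mulr_sumr.
apply: eq_bigr => x _; ring.
Qed.

Lemma mu_p_expR_mean_le (f : cube n -> bool) (T : {set 'I_n}) (s : 'I_n -> R) :
  (forall i, s i = 1 \/ s i = -1) -> 0 < mu_p p f ->
  mu_p p f * expR (Ep p (fun x => (f x)%:R * signed_sum T s x) / (2 * mu_p p f))
    <= expR (#|T|%:R * (p / 2)).
Proof.
move=> s_pm1 M_gt0; pose w x := mu_pt p x * (f x)%:R.
have w_ge0 x : 0 <= w x by rewrite mulr_ge0 ?mu_pt_ge0.
have := @expR_mean_le _ _ w (fun x => signed_sum T s x / 2) w_ge0 M_gt0.
have -> : \sum_x w x * (signed_sum T s x / 2)
    = Ep p (fun x => (f x)%:R * signed_sum T s x) / 2.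
  by rewrite /Ep mulr_suml; apply: eq_bigr => x _; rewrite /w; ring.
rewrite -/(mu_p p f) mulrAC -mulrA -invfM [2 * _]mulrC => /le_trans; apply.
have -> : \sum_x w x * expR (signed_sum T s x / 2)
    = Ep p (fun x => (f x)%:R * expR (signed_sum T s x / 2)).
  by apply: eq_bigr => x _; rewrite /w mulrA.
apply: le_trans _ (Ep_expR_signed_sum_le T s_pm1).
exact: Ep_bool_mul_le (fun x => ltW (expR_gt0 _)).
Qed.

Definition fsign (f : cube n -> bool) (i : 'I_n) : R :=
  if 0 <= fhat1 p f i then 1 else -1.

Lemma fsign_pm1 (f : cube n -> bool) (i : 'I_n) : fsign f i = 1 \/ fsign f i = -1.
Proof. by rewrite /fsign; case: ifP; [left | right]. Qed.

Lemma fsign_mulE (f : cube n -> bool) (i : 'I_n) :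
  fsign f i * fhat1 p f i = `|fhat1 p f i|.
Proof.
rewrite /fsign; case: ifP => [/ger0_norm -> | /negbT]; first by rewrite mul1r.
by rewrite -ltNge => /ltr0_norm ->; rewrite mulN1r.
Qed.

Lemma Ep_signed_sum_heavy_gt (f : cube n -> bool) :
  0 < mu_p p f -> 2 * p * mu_p p f < delta p f * sigma ->
  (0 < #|heavy f|)%N ->
  7 / 5 * p * #|heavy f|%:R * mu_p p f
    < Ep p (fun x => (f x)%:R * signed_sum (heavy f) (fsign f) x).
Proof.
set M := mu_p p f; set T := heavy f => M_gt0 D_gt T_gt0.
rewrite Ep_mul_signed_sum; under eq_bigr => j _ do rewrite fsign_mulE.
have sum_ge : #|T|%:R * (7 / 10 * delta p f) <= \sum_(j in T) `|fhat1 p f j|.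
  apply: le_trans (ler_sum _ (fun j jT => heavy_norm_fhat1_ge jT)).
  by rewrite sumr_const mulr_natl.
have sigma_sum_ge := ler_wpM2l (ltW sigma_gt0) sum_ge.
have scaled_D_gt : #|T|%:R * (7 / 10 * (2 * p * M))
    < #|T|%:R * (7 / 10 * (delta p f * sigma)).
  by rewrite ltr_pM2l ?ltr0n //; lra.
lra.
Qed.

End Biased.

Theorem mainTheorem18 (R : realType) (p : R) (n : nat)
    (f : cube n -> bool) (S : {set 'I_n}) :
  0 < p -> p < 1 ->
  0 < mu_p p f ->
  1 / p ^+ 2 < (mf p f)%:R ->
  (#|S|)%:R <= 1 / (4 * p) ->
  mu_p p (restr0 S f) / mu_p p f < 1 / 4 ->
  mu_p p f < expR (- (1 / 1000) * Num.sqrt ((mf p f)%:R)).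
Proof.
move=> p_gt0 p_lt1 M_gt0 hm hS hr; rewrite mfE in hm *.
have T_gt0 : (0 < #|heavy p f|)%N.
  by rewrite -(ltr0n R); apply: lt_trans hm; rewrite divr_gt0 ?exprn_gt0.
have D_gt := delta_sigma_gt p_gt0 p_lt1 M_gt0 hS hr.
have E_gt := Ep_signed_sum_heavy_gt p_gt0 p_lt1 M_gt0 D_gt T_gt0.
have mean_le := mu_p_expR_mean_le p_gt0 p_lt1 (heavy p f) (fsign_pm1 p f) M_gt0.
have sqrt_le := sqrt_le_mul p_gt0 hm.
set M := mu_p p f in M_gt0 E_gt mean_le *.
set m := #|heavy p f|%:R in E_gt mean_le sqrt_le *.
set c := Ep _ _ / (2 * M) in mean_le.
have pm_gt0 : 0 < p * m by rewrite mulr_gt0 ?ltr0n.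
have c_gt : 7 / 10 * p * m < c by rewrite ltr_pdivlMr ?mulr_gt0 //; lra.
have : expR (m * (p / 2)) < expR (- (1 / 1000) * Num.sqrt m) * expR c.
  by rewrite -expRD ltr_expR; lra.
have := expR_gt0 c; nra.
Qed.
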